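(* Let $X$ be a compact Hausdorff space. Then $X$ is discrete homogeneous if and only if $X$ is $n$-homogeneous for every positive integer $n$; and $X$ is strongly discrete homogeneous if and only if $X$ is strongly $n$-homogeneous for every positive integer $n$.
   Context: $X$ is $n$-homogeneous if for any two subsets $A,B\subseteq X$ of cardinality $n$ there is a homeomorphism $f\colon X\to X$ with $f(A)=B$; it is strongly $n$-homogeneous if every bijection between subsets of cardinality $n$ extends to a homeomorphism $X\to X$. A subset $D$ of $X$ is discrete if each point of $X$ has a neighbourhood containing at most one point of $D$. A Hausdorff space $X$ is discrete homogeneous (DH) if for any two discrete subsets $A,B$ with $|A|=|B|$ there is a homeomorphism $f\colon X\to X$ with $f(A)=B$; it is strongly discrete homogeneous (sDH) if for any two discrete subsets $A,B$ and any bijection $f\colon A\to B$, $f$ extends to a homeomorphism of $X$. *)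

From HB Require Import structures.
From mathcomp Require Import all_boot all_order all_algebra.
From mathcomp Require Import all_classical all_reals all_analysis.
Set Implicit Arguments. Unset Strict Implicit. Unset Printing Implicit Defensive.
Local Open Scope classical_set_scope.

Definition homeo {T : topologicalType} (f : T -> T) : Prop :=
  exists g : T -> T, [/\ cancel f g, cancel g f, continuous f & continuous g].

Definition n_homogeneous (T : topologicalType) (n : nat) : Prop :=
  forall A B : set T, (A #= `I_n)%card -> (B #= `I_n)%card ->
    exists h : T -> T, homeo h /\ h @` A = B.

Definition strongly_n_homogeneous (T : topologicalType) (n : nat) : Prop :=
  forall (A B : set T) (f : T -> T), (A #= `I_n)%card -> (B #= `I_n)%card ->
    set_bij A B f ->
    exists h : T -> T, homeo h /\ (forall a, A a -> h a = f a).

Definition discrete_subset {T : topologicalType} (D : set T) : Prop :=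
  forall x : T, exists U : set T, nbhs x U /\
    (forall a b, D a -> D b -> U a -> U b -> a = b).

Definition discrete_homogeneous (T : topologicalType) : Prop :=
  hausdorff_space T /\
  forall A B : set T, discrete_subset A -> discrete_subset B ->
    (A #= B)%card -> exists h : T -> T, homeo h /\ h @` A = B.

Definition strongly_discrete_homogeneous (T : topologicalType) : Prop :=
  hausdorff_space T /\
  forall (A B : set T) (f : T -> T), discrete_subset A -> discrete_subset B ->
    set_bij A B f ->
    exists h : T -> T, homeo h /\ (forall a, A a -> h a = f a).

From HB Require Import structures.
From mathcomp Require Import all_boot all_order all_algebra.
From mathcomp Require Import all_classical all_reals all_analysis.

Set Implicit Arguments.
Unset Strict Implicit.
Unset Printing Implicit Defensive.

Local Open Scope classical_set_scope.

(* In a compact space a discrete set is finite: the neighbourhoods witnessing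
   discreteness cover the space, a finite subcover remains, and each of its
   members contains at most one point of the set.  Conversely, in a T1 space
   the complement of D minus {x} is a neighbourhood of x meeting the finite
   set D at most in x.  Hence, for a compact Hausdorff space, discrete (strong)
   homogeneity quantifies over exactly the finite sets, i.e. it is (strong)
   n-homogeneity for every n; the case n = 0 is witnessed by the identity. *)

Lemma homeo_id (T : topologicalType) : homeo (@id T).
Proof. by exists id; split => // x; apply: cvg_id. Qed.

Lemma n_homogeneous0 (T : topologicalType) : n_homogeneous T 0.
Proof.
move=> A B; rewrite II0 !card_eq0 => /eqP-> /eqP->.
by exists id; split; [exact: homeo_id | rewrite image_set0].
Qed.

Lemma strongly_n_homogeneous0 (T : topologicalType) :
  strongly_n_homogeneous T 0.
Proof.
move=> A B f; rewrite II0 card_eq0 => /eqP-> _ _.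
by exists id; split; [exact: homeo_id |].
Qed.

Lemma set_bij_card_eq (T U : Type) (A : set T) (B : set U) (f : T -> U) :
  set_bij A B f -> (A #= B)%card.
Proof. by case/Pbij => g _; exact: pcard_eq. Qed.

Local Definition pointed_at (T : topologicalType) (x0 : T) : Type := T.
HB.instance Definition _ (T : topologicalType) (x0 : T) :=
  Topological.copy (pointed_at x0) T.
HB.instance Definition _ (T : topologicalType) (x0 : T) :=
  isPointed.Build (pointed_at x0) x0.

(* [compact_cover] is only stated for pointed spaces; a nonempty set provides
   the point. *)
Lemma compact_cover_compact (T : topologicalType) (A : set T) :
  compact A -> cover_compact A.
Proof.
have [->|/set0P[x _]] := eqVneq A set0; last first.
  by change (compact A -> @cover_compact (pointed_at x) A); rewrite -compact_cover.
by move=> _ I D F _ _; exists finmap.fset0.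
Qed.

Lemma discrete_subset_finite (T : topologicalType) (D : set T) :
  compact [set: T] -> discrete_subset D -> finite_set D.
Proof.
move=> cT /choice[U discrU].
have [F _ coverF] : finite_subset_cover setT (fun x => interior (U x)) setT.
  apply: (compact_cover_compact cT) => [x _|x _]; first exact: open_interior.
  by exists x => //; exact: (discrU x).1.
pose pick x := xget x (D `&` U x).
apply: (sub_finite_set _ (finite_image pick (finite_fset F))) => d Dd.
have [x Fx /nbhs_singleton Uxd] := coverF d I; exists x => //.
rewrite /pick; case: xgetP => [y -> [Dy Uxy]|/(_ d) []//].
exact: (discrU x).2.
Qed.

Lemma finite_discrete_subset (T : topologicalType) (D : set T) :
  accessible_space T -> finite_set D -> discrete_subset D.
Proof.
move=> T1 finD x.
have closedD : closed (D `\ x).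
  by apply: (accessible_finite_set_closed.1 T1); exact: finite_setD.
have onlyx a : D a -> (~` (D `\ x)) a -> a = x.
  by move=> Da Ua; apply: contrapT => ax; apply: Ua.
exists (~` (D `\ x)); split; last by move=> a b Da Db /onlyx-> // /onlyx->.
by apply: open_nbhs_nbhs; split; [exact: closed_openC | move=> [_]; apply].
Qed.

Section discrete_sets_finite.
Variable T : topologicalType.
Hypothesis hT : hausdorff_space T.
Hypothesis discrete_finite : forall D : set T, discrete_subset D -> finite_set D.

Let card_discrete (A : set T) n : (A #= `I_n)%card -> discrete_subset A.
Proof.
by move=> An; apply: finite_discrete_subset (hausdorff_accessible hT) _; exists n.
Qed.

Lemma discrete_homogeneousP :
  discrete_homogeneous T <-> forall n, n_homogeneous T n.
Proof.
split=> [[_ dh] n A B An Bn|hom]; first apply: dh.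
- exact: card_discrete An.
- exact: card_discrete Bn.
- exact: card_eq_trans An (card_esym Bn).
split=> // A B /discrete_finite[n An] _ AB.
exact: hom An (card_eq_trans (card_esym AB) An).
Qed.

Lemma strongly_discrete_homogeneousP :
  strongly_discrete_homogeneous T <-> forall n, strongly_n_homogeneous T n.
Proof.
split=> [[_ sdh] n A B f An Bn|hom].
  exact: sdh (card_discrete An) (card_discrete Bn).
split=> // A B f /discrete_finite[n An] _ bijf.
exact: hom An (card_eq_trans (card_esym (set_bij_card_eq bijf)) An) bijf.
Qed.

End discrete_sets_finite.

Theorem mainTheorem11 (T : topologicalType) :
  hausdorff_space T -> compact [set: T] ->
  (discrete_homogeneous T <-> (forall n : nat, (0 < n)%N -> n_homogeneous T n)) /\
  (strongly_discrete_homogeneous T <->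
     (forall n : nat, (0 < n)%N -> strongly_n_homogeneous T n)).
Proof.
move=> hT cT; have fin D := @discrete_subset_finite T D cT.
rewrite (discrete_homogeneousP hT fin) (strongly_discrete_homogeneousP hT fin).
split; split=> [hom n _|hom [|n]]; do ?exact: hom.
- exact: n_homogeneous0.
- exact: strongly_n_homogeneous0.
Qed.
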